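(* Let $n\ge 3$. Every $\sigma\in\mathcal{S}_n^{1\prec n}(1324)$ that is not a primitive (i.e. $\sigma\notin\mathcal{S}_{n,1}^{1\prec n}(1324)$) admits a unique decomposition $\sigma=\sigma_1\odot\sigma_2$ where $\sigma_1\in\mathcal{S}_{m,1}^{1\prec m}(1324)$ is a primitive for some $m\ge2$ and $\sigma_2\in\mathcal{S}_\ell^{1\prec\ell}(1324)$ with $\ell=n-m+1$.
   Context: $\mathcal{S}_n(1324)$ denotes the set of permutations of $\{1,\dots,n\}$ (in one-line notation) avoiding the pattern $1324$. For $a,k\ge1$, $\mathcal{S}_{n,k}^{a\prec n}(1324)$ is the set of $\sigma\in\mathcal{S}_n(1324)$ with $\sigma^{-1}(n)-\sigma^{-1}(a)=k$ and $\sigma^{-1}(b)>\sigma^{-1}(n)$ for all $b\in\{1,\dots,a-1\}$, and $\mathcal{S}_n^{a\prec n}(1324)=\bigcup_{k\ge1}\mathcal{S}_{n,k}^{a\prec n}(1324)$. Elements of $\mathcal{S}_{m,1}^{1\prec m}(1324)$ are called primitives; such a permutation has the form $\sigma_1=\pi_1\,1\,m\,\tau_1$. Given a primitive $\sigma_1=\pi_1\,1\,m\,\tau_1$ of size $m$ and $\sigma_2\in\mathcal{S}_\ell(1324)$ of the form $\sigma_2=\pi_2\,1\,\theta_2\,\ell\,\tau_2$ (words possibly empty), the product is $\sigma_1\odot\sigma_2=\widehat{\pi}_2\,\pi_1\,1\,m\,\widehat{\theta}_2\,n\,\widehat{\tau}_2\,\tau_1$, where $n=\ell+m-1$ and hats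 denote adding $m-1$ to each entry. *)

(* Permutations in one-line notation are sequences of nats. *)
From mathcomp Require Import all_boot.
Set Implicit Arguments. Unset Strict Implicit. Unset Printing Implicit Defensive.

Definition is_perm (n : nat) (s : seq nat) : Prop := perm_eq s (iota 1 n).

Definition contains1324 (s : seq nat) : Prop :=
  exists i j k l, [/\ i < j, j < k, k < l & l < size s] /\
    [/\ nth 0 s i < nth 0 s k, nth 0 s k < nth 0 s j & nth 0 s j < nth 0 s l].

Definition S1324 (n : nat) (s : seq nat) : Prop :=
  is_perm n s /\ ~ contains1324 s.

(* positions are 0-based: index x s = sigma^{-1}(x) - 1 *)
Definition Sprec_k (a n k : nat) (s : seq nat) : Prop :=
  [/\ S1324 n s,
      index a s < index n s,
      index n s - index a s = k &
      forall b, 1 <= b < a -> index n s < index b s].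

Definition Sprec (a n : nat) (s : seq nat) : Prop :=
  exists k, 1 <= k /\ Sprec_k a n k s.

Definition primitive (m : nat) (s : seq nat) : Prop := Sprec_k 1 m 1 s.

(* The product sigma1 (.) sigma2, for sigma1 = pi1 1 m tau1 (m = size sigma1)
   and sigma2 = pi2 1 theta2 l tau2 (l = size sigma2):
   hat(pi2) pi1 1 m hat(theta2) n hat(tau2) tau1, n = l+m-1,
   hat = add m-1 to every entry. *)
Definition odot (s1 s2 : seq nat) : seq nat :=
  let m := size s1 in
  let l := size s2 in
  let n := l + m - 1 in
  let i1 := index 1 s1 in
  let pi1 := take i1 s1 in
  let tau1 := drop i1.+2 s1 in
  let j1 := index 1 s2 in
  let jl := index l s2 in
  let pi2 := take j1 s2 in
  let theta2 := take (jl - j1.+1) (drop j1.+1 s2) in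
  let tau2 := drop jl.+1 s2 in
  let hat := map (fun x => x + (m - 1)) in
  hat pi2 ++ pi1 ++ [:: 1; m] ++ hat theta2 ++ [:: n] ++ hat tau2 ++ tau1.

(* Write sigma = alpha 1 m beta n gamma, m being the entry right after 1; since
   sigma is not primitive, m <> n.  Avoiding 1324 forces every entry of beta to
   exceed m (else 1 m x n), and inside alpha, as inside gamma, every entry larger
   than m precedes every entry smaller than m (else y z m n, resp. 1 m y z).
   Hence the entries <= m, in order, form a primitive sigma1, the entries >= m,
   shifted down by m - 1, form sigma2, and sigma = sigma1 (.) sigma2.
   Conversely, in any product sigma1 (.) sigma2 the size m of sigma1 is the entry
   following 1, sigma1 is the subsequence of entries <= m and sigma2 the shifted
   subsequence of entries >= m: the factorization is unique. *)

From mathcomp Require Import all_boot zify.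
Set Implicit Arguments. Unset Strict Implicit.

Lemma contains1324_subseq (u s : seq nat) : subseq u s -> contains1324 u -> contains1324 s.
Proof.
case/subseqP=> m size_m ->.
set idx := mask m (iota 0 (size s)).
have map_idx : mask m s = map (nth 0 s) idx.
  by rewrite map_mask map_nth_iota0 // take_size.
have idx_sorted : sorted ltn idx by apply/sorted_mask/iota_ltn_sorted/ltn_trans.
have idx_lt i : i < size idx -> nth 0 idx i < size s.
  by move=> /(mem_nth 0)/mem_mask; rewrite mem_iota.
have idx_mono : {in [pred i | i < size idx] &, {homo nth 0 idx : i j / i < j}}.
  by move=> i j; apply: (sorted_ltn_nth ltn_trans 0 idx_sorted).
rewrite map_idx => -[i [j [k [l [[ij jk kl]]]]]].
rewrite size_map => ls; rewrite !(nth_map 0); try lia.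
exists (nth 0 idx i), (nth 0 idx j), (nth 0 idx k), (nth 0 idx l).
by split=> //; split; try apply: idx_mono; rewrite ?inE; try lia; apply: idx_lt.
Qed.

Lemma subseq_contains1324 a b c d (s : seq nat) :
  subseq [:: a; b; c; d] s -> a < c < b -> b < d -> contains1324 s.
Proof.
move=> sub /andP[ac cb] bd; apply: contains1324_subseq sub _.
by exists 0, 1, 2, 3.
Qed.

Lemma contains1324_map (f : nat -> nat) (s : seq nat) :
  {in s &, {mono f : x y / x < y}} -> contains1324 (map f s) -> contains1324 s.
Proof.
move=> f_mono [i [j [k [l [[ij jk kl]]]]]].
rewrite size_map => ls; rewrite !(nth_map 0); try lia.
have nth_in x : x < size s -> nth 0 s x \in s by apply: mem_nth.
rewrite !f_mono ?nth_in; try lia.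
by exists i, j, k, l.
Qed.

Lemma subseq_pair (x y : nat) (u v : seq nat) :
  x \in u -> y \in v -> subseq [:: x; y] (u ++ v).
Proof. by move=> xu yv; rewrite -cat1s; apply: cat_subseq; rewrite sub1seq. Qed.

Lemma index_lt_split (s : seq nat) x y : uniq s -> x \in s -> y \in s ->
  index x s < index y s -> exists a b c, s = a ++ x :: b ++ y :: c.
Proof.
move=> + + ys; case/splitPr: ys => p c uniq_s xs.
have yNp : y \notin p by move: uniq_s; rewrite cat_uniq /= => /and3P[_ /norP[]].
rewrite index_pivot // -(in_take _ xs) take_size_cat //.
by case/splitPr=> a b; exists a, b, c; rewrite -catA.
Qed.

Lemma index_pivot2 (a b c : seq nat) x y : uniq (a ++ x :: b ++ y :: c) ->
  index x (a ++ x :: b ++ y :: c) = size a /\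
  index y (a ++ x :: b ++ y :: c) = size a + (size b).+1.
Proof.
move=> uniq_s; have E : a ++ x :: b ++ y :: c = (a ++ x :: b) ++ y :: c by rewrite -catA.
have xNa : x \notin a by move: uniq_s; rewrite cat_uniq /= => /and3P[_ /norP[]].
have yN : y \notin a ++ x :: b by move: uniq_s; rewrite E cat_uniq /= => /and3P[_ /norP[]].
by rewrite index_pivot // E index_pivot // size_cat.
Qed.

Lemma drop_size_cat_add (a r : seq nat) k : drop (size a + k) (a ++ r) = drop k r.
Proof. by rewrite addnC -drop_drop drop_size_cat. Qed.

Lemma filter_in_pred0 (P : pred nat) (s : seq nat) :
  {in s, forall x, ~~ P x} -> filter P s = [::].
Proof. by move=> nP; rewrite (eq_in_filter (a2 := pred0)) ?filter_pred0 // => x /nP/negbTE. Qed.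

Lemma filter_in_predT (P : pred nat) (s : seq nat) :
  {in s, forall x, P x} -> filter P s = s.
Proof. by move=> sP; apply/all_filterP/allP. Qed.

Lemma filter_prefix_split (P : pred nat) (u : seq nat) :
  (forall y z, subseq [:: y; z] u -> P z -> P y) ->
  u = filter P u ++ filter (predC P) u.
Proof.
elim: u => // x u IH closed.
have {}IH : u = filter P u ++ filter (predC P) u.
  by apply: IH => y z yz; apply: closed; apply: subseq_trans yz (subseq_cons _ _).
rewrite /=; case Px: (P x) => /=; first by congr (_ :: _).
suff P_nil : filter P u = [::] by rewrite P_nil; congr (_ :: _); rewrite {1}IH P_nil.
apply: filter_in_pred0 => z zu; apply/negP => Pz.
by move: Px; rewrite (closed x z) // /= eqxx sub1seq.
Qed.

Lemma filter_split_value m (u : seq nat) : m \notin u ->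
  ~ (exists y z, subseq [:: y; z] u /\ y < m < z) ->
  u = filter (leq m) u ++ filter (fun x => x <= m) u.
Proof.
move=> mNu no_inv; rewrite {1}(filter_prefix_split (P := leq m) (u := u)).
  congr (_ ++ _); apply: eq_in_filter => x xu /=.
  by rewrite -ltnNge ltn_neqAle; case: eqP xu mNu => // ->->.
move=> y z yz m_le_z; rewrite leqNgt; apply/negP => y_lt_m; apply: no_inv.
exists y, z; split=> //; rewrite y_lt_m ltn_neqAle m_le_z andbT /=.
by apply: contraNneq mNu => ->; apply: (mem_subseq yz); rewrite !inE eqxx orbT.
Qed.

Lemma perm_pivot2 (a b c : seq nat) x y :
  perm_eq (a ++ x :: b ++ y :: c) ([:: x; y] ++ a ++ b ++ c).
Proof. by apply/permP => p; rewrite !count_cat /= !count_cat /=; lia. Qed.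

Lemma perm_iota_notin n (u r : seq nat) x : perm_eq (u ++ r) (iota 1 n) ->
  x \in r -> [/\ 0 < x, x <= n & x \notin u].
Proof.
move=> uir xr; have := perm_uniq uir; rewrite iota_uniq cat_uniq.
case/and3P=> _ /hasPn/(_ x xr) xNu _.
by have := perm_mem uir x; rewrite mem_cat xr orbT mem_iota => /esym; split=> //; lia.
Qed.

Lemma perm_filter_le_iota n m (s : seq nat) : m <= n -> perm_eq s (iota 1 n) ->
  perm_eq (filter (fun x => x <= m) s) (iota 1 m).
Proof.
move=> le_mn perm_s; apply: uniq_perm; rewrite ?filter_uniq ?iota_uniq //.
  by rewrite (perm_uniq perm_s) iota_uniq.
by move=> x; rewrite mem_filter (perm_mem perm_s) !mem_iota; lia.
Qed.

Lemma perm_shift_filter_ge_iota n m (s : seq nat) : 0 < m <= n -> perm_eq s (iota 1 n) ->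
  perm_eq (map (subn^~ (m - 1)) (filter (leq m) s)) (iota 1 (n - m + 1)).
Proof.
move=> m_bd perm_s; have : perm_eq (filter (leq m) s) (iota m (n - m + 1)).
  apply: uniq_perm; rewrite ?filter_uniq ?iota_uniq //.
    by rewrite (perm_uniq perm_s) iota_uniq.
  by move=> x; rewrite mem_filter (perm_mem perm_s) !mem_iota; lia.
move/(perm_map (subn^~ (m - 1))); congr perm_eq.
rewrite -[X in iota X _](@subnK 1 m) ?iotaDl -?map_comp; last by case/andP: m_bd.
by rewrite (eq_map (g := id)) ?map_id // => x /=; rewrite addKn.
Qed.

Lemma Sprec_k1_split n k s : Sprec_k 1 n k s ->
  exists a b c, [/\ s = a ++ 1 :: b ++ n :: c, k = (size b).+1, size s = n,
    uniq s & {in a ++ b ++ c, forall x, 1 < x < n}].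
Proof.
case=> -[perm_s _] lt <- _; rewrite /is_perm in perm_s.
have uniq_s : uniq s by rewrite (perm_uniq perm_s) iota_uniq.
have n_gt0 : 0 < n by case: n perm_s lt => // /perm_size; case: s {uniq_s}.
have [a [b [c Es]]] : exists a b c, s = a ++ 1 :: b ++ n :: c.
  by apply: index_lt_split; rewrite // (perm_mem perm_s) mem_iota; lia.
subst s; exists a, b, c; split=> //.
- by have [-> ->] := index_pivot2 uniq_s; lia.
- by rewrite (perm_size perm_s) size_iota.
move=> x xr; have /perm_iota_notin/(_ xr) : perm_eq ([:: 1; n] ++ a ++ b ++ c) (iota 1 n).
  by apply: perm_trans perm_s; rewrite perm_sym perm_pivot2.
by rewrite !inE => -[? ? /norP[/eqP ? /eqP ?]]; lia.
Qed.

Lemma Sprec_k1_cat n (a b c : seq nat) :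
  S1324 n (a ++ 1 :: b ++ n :: c) -> Sprec_k 1 n (size b).+1 (a ++ 1 :: b ++ n :: c).
Proof.
move=> S_s; have uniq_s : uniq (a ++ 1 :: b ++ n :: c).
  by case: S_s => perm_s _; rewrite (perm_uniq perm_s) iota_uniq.
have [idx1 idxn] := index_pivot2 uniq_s.
by split=> //; rewrite ?idx1 ?idxn; [lia | lia | move=> ?; lia].
Qed.

Lemma odot_cat (a c b th t : seq nat) m l :
  uniq (a ++ 1 :: m :: c) -> size (a ++ 1 :: m :: c) = m ->
  uniq (b ++ 1 :: th ++ l :: t) -> size (b ++ 1 :: th ++ l :: t) = l ->
  odot (a ++ 1 :: m :: c) (b ++ 1 :: th ++ l :: t) =
  map (addn^~ (m - 1)) b ++ a ++ [:: 1; m] ++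
    map (addn^~ (m - 1)) th ++ [:: l + m - 1] ++ map (addn^~ (m - 1)) t ++ c.
Proof.
move=> uniq1 size1 uniq2 size2.
have [i1 _] := index_pivot2 (b := [::]) uniq1.
have [j1 jl] := index_pivot2 uniq2.
rewrite /odot size1 size2 i1 j1 jl take_size_cat //.
have -> : size b + (size th).+1 - (size b).+1 = size th by lia.
rewrite -[(size a).+2]addn2 -[(size b).+1]addn1 -addnS -addn2 take_size_cat //.
rewrite !drop_size_cat_add /=.
by rewrite !drop0 take_size_cat // addnS /= drop_size_cat_add /= drop0.
Qed.

Section OdotShape.

Variables (m l : nat) (a c b th t : seq nat).
Hypotheses (m_gt1 : 1 < m) (l_gt1 : 1 < l).
Hypothesis ac_bounds : {in a ++ c, forall x, 1 < x < m}.
Hypothesis bt_gt1 : {in b ++ th ++ t, forall x, 1 < x}.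
Local Notation hat := (map (addn^~ (m - 1))).
Local Notation w := (hat b ++ a ++ [:: 1; m] ++ hat th ++ [:: l + m - 1] ++ hat t ++ c).

Let sub_a : {subset a <= a ++ c}. Proof. by move=> x xa; rewrite mem_cat xa. Qed.
Let sub_c : {subset c <= a ++ c}. Proof. by move=> x xc; rewrite mem_cat xc orbT. Qed.
Let sub_b : {subset b <= b ++ th ++ t}. Proof. by move=> x xb; rewrite mem_cat xb. Qed.
Let sub_th : {subset th <= b ++ th ++ t}. Proof. by move=> x xt; rewrite !mem_cat xt orbT. Qed.
Let sub_t : {subset t <= b ++ th ++ t}. Proof. by move=> x xt; rewrite !mem_cat xt !orbT. Qed.

Let filter_ac_le X : {subset X <= a ++ c} -> filter (fun x => x <= m) X = X.
Proof. by move=> sub; apply: filter_in_predT => x /sub/ac_bounds; lia. Qed.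

Let filter_ac_ge X : {subset X <= a ++ c} -> filter (leq m) X = [::].
Proof. by move=> sub; apply: filter_in_pred0 => x /sub/ac_bounds; lia. Qed.

Let filter_hat_le X : {subset X <= b ++ th ++ t} -> filter (fun x => x <= m) (hat X) = [::].
Proof. by move=> sub; apply: filter_in_pred0 => _ /mapP[x /sub/bt_gt1 x_gt ->]; lia. Qed.

Let filter_hat_ge X : {subset X <= b ++ th ++ t} -> filter (leq m) (hat X) = hat X.
Proof. by move=> sub; apply: filter_in_predT => _ /mapP[x /sub/bt_gt1 x_gt ->]; lia. Qed.

Lemma nth_after_one_shape : nth 0 w (index 1 w).+1 = m.
Proof.
have oneN : 1 \notin hat b ++ a.
  rewrite mem_cat negb_or; apply/andP; split; apply/negP.
  - by case/mapP=> x /sub_b/bt_gt1; lia.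
  - by move/sub_a/ac_bounds; lia.
by rewrite catA index_pivot // nth_cat ltnNge leqnSn /= subSnn.
Qed.

Lemma filter_le_shape : filter (fun x => x <= m) w = a ++ 1 :: m :: c.
Proof.
rewrite !filter_cat !filter_hat_le // (filter_ac_le sub_a) (filter_ac_le sub_c) /=.
by rewrite (ltnW m_gt1) leqnn ifF //; lia.
Qed.

Lemma filter_ge_shape : filter (leq m) w = hat (b ++ 1 :: th ++ l :: t).
Proof.
rewrite !filter_cat !filter_hat_ge // (filter_ac_ge sub_a) (filter_ac_ge sub_c) /=.
rewrite ifF ?leqnn ?ifT ?cats0; try lia.
have -> : l + m - 1 = l + (m - 1) by lia.
by rewrite map_cat /= map_cat /= (_ : 1 + (m - 1) = m) //; lia.
Qed.

End OdotShape.

Lemma odot_filters m l s1 s2 : primitive m s1 -> Sprec 1 l s2 ->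
  [/\ nth 0 (odot s1 s2) (index 1 (odot s1 s2)).+1 = m,
      filter (fun x => x <= m) (odot s1 s2) = s1 &
      filter (leq m) (odot s1 s2) = map (addn^~ (m - 1)) s2].
Proof.
case/Sprec_k1_split=> a [b0 [c [-> b0_nil size1 uniq1 ac_bounds]]].
have {}b0_nil : b0 = [::] by apply/size0nil; lia.
rewrite {b0}b0_nil /= in size1 uniq1 ac_bounds *.
case=> k [_ /Sprec_k1_split[b [th [t [-> _ size2 uniq2 bt_bounds]]]]].
have m_gt1 : 1 < m by move: size1; rewrite size_cat /=; lia.
have l_gt1 : 1 < l by move: size2; rewrite size_cat /= size_cat /=; lia.
have bt_gt1 : {in b ++ th ++ t, forall x, 1 < x} by move=> x /bt_bounds/andP[].
rewrite odot_cat //; split.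
- exact: nth_after_one_shape.
- exact: filter_le_shape.
- exact: filter_ge_shape.
Qed.

Lemma odot_inj m m' l l' s1 s1' s2 s2' :
  primitive m s1 -> Sprec 1 l s2 -> primitive m' s1' -> Sprec 1 l' s2' ->
  odot s1 s2 = odot s1' s2' -> [/\ m = m', s1 = s1' & s2 = s2'].
Proof.
move=> prim1 prec2 prim1' prec2' E.
have [m_nth low1 high2] := odot_filters prim1 prec2.
have [m'_nth low1' high2'] := odot_filters prim1' prec2'.
have Em : m = m' by rewrite -m_nth -m'_nth E.
rewrite -Em in low1' high2'; split=> //; first by rewrite -low1 E low1'.
by apply: (inj_map (@addIn (m - 1))); rewrite -high2 E high2'.
Qed.

Section Factorization.

Variables (n m : nat) (al be ga : seq nat).
Local Notation s := (al ++ 1 :: m :: be ++ n :: ga).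
Local Notation low := (filter (fun x => x <= m)).
Local Notation high := (filter (leq m)).
Local Notation unhat := (map (subn^~ (m - 1))).
Hypothesis perm_s : perm_eq s (iota 1 n).
Hypothesis avoid_s : ~ contains1324 s.

Let perm_s' : perm_eq ([:: 1; m; n] ++ al ++ be ++ ga) (iota 1 n).
Proof. by apply: perm_trans perm_s; apply/permP => p; rewrite !count_cat /= !count_cat /=; lia. Qed.

Lemma m_bounds : 1 < m < n.
Proof.
have := perm_iota_notin (u := [:: 1]) perm_s' (mem_head m _).
have := perm_iota_notin (u := [:: 1; m]) perm_s' (mem_head n _).
by rewrite !inE => -[_ _ /norP[_ /eqP ?]] [? ? /eqP ?]; lia.
Qed.

Let rest_bounds : {in al ++ be ++ ga, forall x, [/\ 1 < x, x < n & x != m]}.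
Proof.
move=> x /(perm_iota_notin perm_s'); rewrite !inE.
by case=> ? ? /norP[/eqP ? /norP[-> /eqP ?]]; split; lia.
Qed.

Let m_notin : m \notin al ++ be ++ ga.
Proof. by apply/negP => /rest_bounds[_ _]; rewrite eqxx. Qed.

Lemma be_gt_m : {in be, forall x, m < x}.
Proof.
move=> x xbe; have [x_gt1 x_ltn x_neqm] : [/\ 1 < x, x < n & x != m].
  by apply: rest_bounds; rewrite !mem_cat xbe orbT.
rewrite ltn_neqAle eq_sym x_neqm leqNgt /=; apply/negP => x_ltm; apply: avoid_s.
apply: (@subseq_contains1324 1 m x n); rewrite ?x_gt1 ?x_ltm //; last by case/andP: m_bounds.
rewrite -[[:: 1; m; x; n]]/([:: 1; m] ++ [:: x; n]) -[s]/(al ++ [:: 1; m] ++ be ++ n :: ga) catA.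
by apply: cat_subseq (suffix_subseq _ _) _; apply: subseq_pair; rewrite ?mem_head.
Qed.

Lemma al_split : al = high al ++ low al.
Proof.
apply: filter_split_value => [|[y [z [yz /andP[y_lt z_gt]]]]].
  by move: m_notin; rewrite mem_cat negb_or => /andP[].
have [_ z_lt _] : [/\ 1 < z, z < n & z != m].
  by apply: rest_bounds; rewrite mem_cat (mem_subseq yz) // !inE eqxx orbT.
apply: avoid_s; apply: (@subseq_contains1324 y z m n); rewrite ?y_lt ?z_gt //.
by apply: cat_subseq yz _; apply: (@subseq_pair m n [:: 1; m]); rewrite ?mem_cat !inE eqxx ?orbT.
Qed.

Lemma ga_split : ga = high ga ++ low ga.
Proof.
apply: filter_split_value => [|[y [z [yz /andP[y_lt z_gt]]]]].
  by move: m_notin; rewrite !mem_cat !negb_or => /and3P[].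
have [y_gt _ _] : [/\ 1 < y, y < n & y != m].
  by apply: rest_bounds; rewrite !mem_cat (mem_subseq yz) ?orbT // !inE eqxx.
apply: avoid_s; apply: (@subseq_contains1324 1 m y z); rewrite ?y_lt ?y_gt ?z_gt //.
rewrite -[[:: 1; m; y; z]]/([:: 1; m] ++ [:: y; z]) -[s]/(al ++ [:: 1; m] ++ be ++ n :: ga) catA.
apply: cat_subseq (suffix_subseq _ _) (subseq_trans yz _).
by rewrite -cat_rcons; apply: suffix_subseq.
Qed.

Lemma low_s : low s = low al ++ 1 :: m :: low ga.
Proof.
have [m_gt1 m_ltn] := andP m_bounds.
rewrite filter_cat /= filter_cat /= (filter_in_pred0 (s := be)) => [|x /be_gt_m]; last by lia.
by rewrite ltnW // leqnn leqNgt m_ltn.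
Qed.

Lemma high_s : high s = high al ++ m :: be ++ n :: high ga.
Proof.
have [m_gt1 m_ltn] := andP m_bounds.
rewrite filter_cat /= filter_cat /= (filter_in_predT (s := be)) => [|x /be_gt_m]; last by lia.
by rewrite leqNgt m_gt1 leqnn ltnW.
Qed.

Lemma unhat_high_s :
  unhat (high s) = unhat (high al) ++ 1 :: unhat be ++ (n - m + 1) :: unhat (high ga).
Proof.
have [m_gt1 m_ltn] := andP m_bounds.
rewrite high_s map_cat /= map_cat /=.
have -> : m - (m - 1) = 1 by lia.
by have -> : n - (m - 1) = n - m + 1 by lia.
Qed.

Lemma primitive_low : primitive m (low s).
Proof.
have m_ltn : m < n by case/andP: m_bounds.
rewrite /primitive low_s; apply: (Sprec_k1_cat (b := [::])); rewrite -low_s; split.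
  exact: perm_filter_le_iota (ltnW m_ltn) perm_s.
by move/(contains1324_subseq (filter_subseq _ _)).
Qed.

Lemma Sprec_unhat_high : Sprec 1 (n - m + 1) (unhat (high s)).
Proof.
have [m_gt1 m_ltn] := andP m_bounds.
exists (size be).+1; split=> //; rewrite -(size_map (subn^~ (m - 1))) unhat_high_s.
apply: Sprec_k1_cat; rewrite -unhat_high_s; split.
  by apply: perm_shift_filter_ge_iota perm_s; lia.
move=> contains_unhat; apply: avoid_s; apply: contains1324_subseq (filter_subseq (leq m) s) _.
apply: contains1324_map contains_unhat => x y.
by rewrite !mem_filter => /andP[mx _] /andP[my _]; apply/idP/idP; lia.
Qed.

Lemma odot_low_unhat_high : s = odot (low s) (unhat (high s)).
Proof.
have [m_gt1 m_ltn] := andP m_bounds.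
have [[perm1 _] _ _ _] := primitive_low.
have [_ [_ [[perm2 _] _ _ _]]] := Sprec_unhat_high.
have hat_unhat X : {in X, forall x, m <= x} -> map (addn^~ (m - 1)) (unhat X) = X.
  by move=> X_ge; rewrite -map_comp map_id_in // => x /X_ge /=; lia.
rewrite low_s unhat_high_s odot_cat -?low_s -?unhat_high_s; first last.
- by rewrite (perm_size perm2) size_iota.
- by rewrite (perm_uniq perm2) iota_uniq.
- by rewrite (perm_size perm1) size_iota.
- by rewrite (perm_uniq perm1) iota_uniq.
have high_ge X : {in high X, forall x, m <= x} by move=> x; rewrite mem_filter => /andP[].
have be_ge : {in be, forall x, m <= x} by move=> x /be_gt_m /ltnW.
rewrite !hat_unhat //.
by rewrite {1}al_split {1}ga_split -!catA (_ : n - m + 1 + m - 1 = n) //; lia.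
Qed.

End Factorization.

Theorem mainTheorem3 (n : nat) (s : seq nat) :
  3 <= n -> Sprec 1 n s -> ~ primitive n s ->
  (exists m s1 s2,
     [/\ 2 <= m, primitive m s1, Sprec 1 (n - m + 1) s2 & s = odot s1 s2])
  /\
  (forall m s1 s2 m' s1' s2',
     [/\ 2 <= m, primitive m s1, Sprec 1 (n - m + 1) s2 & s = odot s1 s2] ->
     [/\ 2 <= m', primitive m' s1', Sprec 1 (n - m' + 1) s2' & s = odot s1' s2'] ->
     [/\ m = m', s1 = s1' & s2 = s2']).
Proof.
move=> _ [k [_ prec]] not_prim; split; last first.
  move=> m s1 s2 m' s1' s2' [_ prim prec2 ->] [_ prim' prec2' eq_odot].
  exact: odot_inj prim prec2 prim' prec2' eq_odot.
have [[perm_s avoid_s] _ _ _] := prec.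
have [al [[|m be] [ga [Es k_def _ _ _]]]] := Sprec_k1_split prec; subst s k => //.
exists m, (filter (fun x => x <= m) (al ++ 1 :: m :: be ++ n :: ga)),
  (map (subn^~ (m - 1)) (filter (leq m) (al ++ 1 :: m :: be ++ n :: ga))).
split.
- by case/andP: (m_bounds perm_s).
- exact: primitive_low.
- exact: Sprec_unhat_high.
- exact: odot_low_unhat_high.
Qed.
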